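(* Let $X\subseteq\mathbb{R}^D$ be a finite dataset, $\varepsilon>0$, and $\mathrm{minPts}$ a positive integer. Call $x\in X$ a DBSCAN core-point if $|B(x,\varepsilon)\cap X|\ge\mathrm{minPts}$, where $B(x,\varepsilon)=\{x':|x-x'|\le\varepsilon\}$. Let $S\subseteq X$ be any subset, and call $x\in S$ a DBSCAN++ core-point if $|B(x,\varepsilon)\cap X|\ge\mathrm{minPts}$. Let $N_0$ be the set of points of $X$ at distance greater than $\varepsilon$ from every DBSCAN core-point (the DBSCAN noise points), and $N_1$ the set of points of $X$ at distance greater than $\varepsilon$ from every DBSCAN++ core-point (the DBSCAN++ noise points), both computed with the same $\varepsilon$ and $\mathrm{minPts}$. Then $N_0\subseteq N_1$.
   Context: DBSCAN forms a graph connecting each core-point to all sample points within distance $\varepsilon$ and returns connected components as clusters; points not in this graph, i.e. farther than $\varepsilon$ from every core-point, are noise points (outliers). DBSCAN++ does the same but only considers core-points in a chosen subset $S$ of the data. *)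

From HB Require Import structures.
From mathcomp Require Import all_boot all_order all_algebra.
From mathcomp Require Import finmap.
From mathcomp Require Import reals.
Set Implicit Arguments. Unset Strict Implicit. Unset Printing Implicit Defensive.
Import Order.TTheory GRing.Theory Num.Theory.
Local Open Scope ring_scope.
Local Open Scope fset_scope.

Definition edist (R : realType) (D : nat) (x y : 'rV[R]_D) : R :=
  Num.sqrt (\sum_(i < D) (x ord0 i - y ord0 i) ^+ 2).

Definition ball_count (R : realType) (D : nat) (X : {fset 'rV[R]_D}) (eps : R)
  (x : 'rV[R]_D) : nat :=
  #|` [fset y in X | edist x y <= eps]|.

(* x is a core-point w.r.t. candidate set C (C = X for DBSCAN, C = S for DBSCAN++) *)
Definition core_point (R : realType) (D : nat) (X C : {fset 'rV[R]_D}) (eps : R)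
  (minPts : nat) (x : 'rV[R]_D) : Prop :=
  x \in C /\ (minPts <= ball_count X eps x)%N.

Definition noise_point (R : realType) (D : nat) (X C : {fset 'rV[R]_D}) (eps : R)
  (minPts : nat) (x : 'rV[R]_D) : Prop :=
  x \in X /\ forall c, core_point X C eps minPts c -> eps < edist x c.

From HB Require Import structures.
From mathcomp Require Import all_boot all_order all_algebra.
From mathcomp Require Import finmap.
From mathcomp Require Import reals.
Import Order.TTheory GRing.Theory Num.Theory.
Local Open Scope ring_scope.
Local Open Scope fset_scope.

Section NoiseMonotone.

Variables (R : realType) (D : nat) (X : {fset 'rV[R]_D}) (eps : R) (minPts : nat).

Lemma core_point_subset {C C' : {fset 'rV[R]_D}} {c : 'rV[R]_D} :
  C `<=` C' -> core_point X C eps minPts c -> core_point X C' eps minPts c.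
Proof. by move=> /fsubsetP sCC' [cC cnt]; split; first exact: sCC'. Qed.

Lemma noise_point_subset {C C' : {fset 'rV[R]_D}} {x : 'rV[R]_D} :
  C `<=` C' -> noise_point X C' eps minPts x -> noise_point X C eps minPts x.
Proof.
move=> sCC' [xX far]; split=> // c core_c.
exact: far (core_point_subset sCC' core_c).
Qed.

End NoiseMonotone.

Theorem lemma1 (R : realType) (D : nat) (X S : {fset 'rV[R]_D}) (eps : R)
  (minPts : nat) :
  0 < eps -> (0 < minPts)%N -> S `<=` X ->
  forall x : 'rV[R]_D,
    noise_point X X eps minPts x -> noise_point X S eps minPts x.
Proof. by move=> _ _ sSX x; apply: noise_point_subset. Qed.
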